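(* For every finite digraph $G$ we have $G\le P_1$; i.e. $P_1$ is the greatest element of $\mathfrak P_{\mathrm{Digraphs}}$. Moreover $P_1 \le C_1$ and $C_1\le P_1$.
   Context: A digraph is a pair $(V,E)$ with $E\subseteq V^2$. A homomorphism maps edges to edges; homomorphic equivalence means homomorphisms in both directions. A primitive positive formula is $\exists y_1,\dots,y_n(\psi_1\wedge\dots\wedge\psi_m)$ where each $\psi_i$ is $\bot$, $z_1=z_2$, or $E(z_1,z_2)$. For $H=(V,E)$, a pp power of dimension $d$ is the digraph on $V^d$ with edges $\{(u,v): \phi(u,v)\text{ holds in }H\}$ for a pp formula $\phi(x_1,\dots,x_d,y_1,\dots,y_d)$. $H\le G$ means $G$ is homomorphically equivalent to a pp power of $H$; $\mathfrak P_{\mathrm{Digraphs}}$ is the poset of finite digraphs modulo mutual $\le$. $P_1$ is the digraph with one vertex and no edges; $C_1$ is the digraph with one vertex and a loop. *)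

From mathcomp Require Import all_boot.
Set Implicit Arguments. Unset Strict Implicit. Unset Printing Implicit Defensive.

Record digraph := Digraph { vert : finType; edge : rel vert }.

Definition hom (G H : digraph) (f : vert G -> vert H) : Prop :=
  forall x y, edge x y -> edge (f x) (f y).
Definition hom_exists (G H : digraph) : Prop := exists f, @hom G H f.
Definition hom_equiv (G H : digraph) : Prop := hom_exists G H /\ hom_exists H G.

Inductive atom (X : Type) := ABot | AEq of X & X | AEdge of X & X.
Arguments ABot {X}.

(* A primitive positive formula φ(x_1..x_d, y_1..y_d) = ∃ z_1..z_n (ψ_1 ∧ … ∧ ψ_m).
   Free variables: inl (inl i) = x_i, inl (inr i) = y_i; bound ones: inr j = z_j. *)
Record ppformula (d : nat) := PPFormula {
  pp_nex : nat;
  pp_atoms : seq (atom (('I_d + 'I_d) + 'I_pp_nex))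
}.

Definition eval_atom (G : digraph) (X : Type) (s : X -> vert G) (a : atom X) : bool :=
  match a with
  | ABot => false
  | AEq z1 z2 => s z1 == s z2
  | AEdge z1 z2 => edge (s z1) (s z2)
  end.

Definition pp_holds (G : digraph) (d : nat) (phi : ppformula d)
    (u v : {ffun 'I_d -> vert G}) : bool :=
  [exists w : {ffun 'I_(pp_nex phi) -> vert G},
     all (eval_atom (fun z => match z with
                              | inl (inl i) => u i
                              | inl (inr i) => v i
                              | inr j => w j
                              end)) (pp_atoms phi)].

Definition pp_power (G : digraph) (d : nat) (phi : ppformula d) : digraph :=
  @Digraph {ffun 'I_d -> vert G} (fun u v => pp_holds phi u v).

Definition pp_le (H G : digraph) : Prop :=
  exists (d : nat) (phi : ppformula d), 0 < d /\ hom_equiv G (@pp_power H d phi).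

Definition P1 : digraph := @Digraph unit (fun _ _ => false).
Definition C1 : digraph := @Digraph unit (fun _ _ => true).

(* Over a nonempty digraph, the pp power defined by the formula [⊥] is a
   nonempty edgeless digraph and the one defined by the empty conjunction is
   a digraph with a loop.  All nonempty edgeless digraphs are homomorphically
   equivalent (to P_1), and so are all digraphs having a loop (to C_1). *)

From mathcomp Require Import all_boot.

Definition edgeless (G : digraph) : Prop := forall x y : vert G, ~~ edge x y.

Lemma hom_edgeless (G H : digraph) (f : vert G -> vert H) :
  edgeless G -> hom f.
Proof. by move=> noE x y; rewrite (negbTE (noE x y)). Qed.

Lemma hom_const_loop (G H : digraph) (y : vert H) :
  edge y y -> @hom G H (fun _ => y).
Proof. by move=> yy. Qed.

Lemma hom_equiv_edgeless (G H : digraph) (x : vert G) (y : vert H) :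
  edgeless G -> edgeless H -> hom_equiv G H.
Proof.
by move=> noEG noEH; split; [exists (fun _ => y) | exists (fun _ => x)];
  apply: hom_edgeless.
Qed.

Lemma hom_equiv_loop (G H : digraph) (x : vert G) (y : vert H) :
  edge x x -> edge y y -> hom_equiv G H.
Proof.
by move=> xx yy; split; [exists (fun _ => y) | exists (fun _ => x)];
  apply: hom_const_loop.
Qed.

Definition pp_false (d : nat) : ppformula d := @PPFormula d 0 [:: ABot].
Definition pp_true (d : nat) : ppformula d := @PPFormula d 0 [::].

Lemma pp_power_false_edgeless (G : digraph) (d : nat) :
  edgeless (pp_power G (pp_false d)).
Proof. by move=> u v; apply/existsP => -[w]. Qed.

Lemma pp_power_true_loop (G : digraph) (d : nat) (u : {ffun 'I_d -> vert G}) :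
  @edge (pp_power G (pp_true d)) u u.
Proof. by apply/existsP; exists (ffun0 (card_ord 0)). Qed.

Lemma pp_le_P1 (G : digraph) : 0 < #|vert G| -> pp_le G P1.
Proof.
case/card_gt0P => x _; exists 1, (pp_false 1); split => //.
by apply: (@hom_equiv_edgeless P1 (pp_power G _) tt [ffun=> x]) => //;
  apply: pp_power_false_edgeless.
Qed.

Lemma pp_le_C1 (G : digraph) : 0 < #|vert G| -> pp_le G C1.
Proof.
case/card_gt0P => x _; exists 1, (pp_true 1); split => //.
by apply: (@hom_equiv_loop C1 (pp_power G _) tt [ffun=> x]) => //;
  apply: pp_power_true_loop.
Qed.

Theorem mainTheorem2 :
  (forall G : digraph, 0 < #|vert G| -> pp_le G P1) /\ pp_le P1 C1 /\ pp_le C1 P1.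
Proof.
split; [exact: pp_le_P1 | split].
- by apply: pp_le_C1; rewrite card_unit.
- by apply: pp_le_P1; rewrite card_unit.
Qed.
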